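(* Let $\mathcal P$ be a reduced operad over $\mathbf{k}$, let $V$ be a $\mathbf{k}$-module and let $\lambda\in\mathbf{k}$. Consider the free $\mathcal P$-algebra $\mathcal P(V)=\bigoplus_{n\ge 1}\mathcal P(n)\otimes_{S_n}V^{\otimes n}$ with the embedding $V\hookrightarrow\mathcal P(V)$. Then restriction to $V$ gives a bijection $$\mathrm{Diff}_\lambda(\mathcal P(V))\;\cong\;\mathrm{Hom}_{\mathbf{k}}(V,\mathcal P(V)),$$ where $\mathrm{Diff}_\lambda(\mathcal P(V))$ is the set of derivations of weight $\lambda$ on $\mathcal P(V)$. More precisely, for every linear map $\phi:V\to\mathcal P(V)$ there is a unique derivation $d_\phi$ of weight $\lambda$ on $\mathcal P(V)$ whose restriction to $V$ is $\phi$, and it is given, for all $n\ge1$, $f\in\mathcal P(n)$ and $v_1,\dots,v_n\in V$, by $$d_\phi\big(f(v_1,\dots,v_n)\big)=\sum_{k=1}^{n}\lambda^{k-1}\sum_{1\le i_1<\dots<i_k\le n} f\big(v_1,\dots,\phi(v_{i_1}),\dots,\phi(v_{i_k}),\dots,v_n\big),$$ where $\phi$ is applied exactly at the positions $i_1,\dots,i_k$ and the right-hand side is evaluated using the $\mathcal P$-algebra structure of $\mathcal P(V)$ (i.e. the operadic composition $\gamma$).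
   Context: $\mathbf{k}$ is a commutative unital ring. An operad $\mathcal P=\{\mathcal P(n)\}_{n\ge0}$ is a collection of right $S_n$-modules with an associative and unital composition $\gamma:\mathcal P\circ\mathcal P\to\mathcal P$ and unit $\eta:I\to\mathcal P$ (in the sense of Loday–Vallette); it is reduced if $\mathcal P(0)=0$. For a module $A$, $\mathcal P(A)=\bigoplus_n\mathcal P(n)\otimes_{S_n}A^{\otimes n}$; a $\mathcal P$-algebra is a module $A$ with a structure map $\gamma_A:\mathcal P(A)\to A$ compatible with $\gamma$ and $\eta$; for $f\in\mathcal P(n)$ write $f(a_1,\dots,a_n)=\gamma_A(f\otimes a_1\otimes\dots\otimes a_n)$. For a module $V$, $\mathcal P(V)$ with structure map induced by $\gamma$ is the free $\mathcal P$-algebra on $V$. Given $\lambda\in\mathbf{k}$ and a $\mathcal P$-algebra $A$, a linear map $d:A\to A$ is a derivation of weight $\lambda$ if for all $n\ge1$, $f\in\mathcal P(n)$, $a_1,\dots,a_n\in A$: $$d\big(f(a_1,\dots,a_n)\big)=\sum_{k=1}^{n}\lambda^{k-1}\sum_{1\le i_1<\dots<i_k\le n}f\big(a_1,\dots,d(a_{i_1}),\dots,d(a_{i_k}),\dots,a_n\big),$$ with $d$ applied exactly at positions $i_1,\dots,i_k$. (For associative algebras this is $d(ab)=d(a)b+ad(b)+\lambda d(a)d(b)$.) *)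

From HB Require Import structures.
From mathcomp Require Import all_boot all_order all_fingroup all_algebra.
Set Implicit Arguments. Unset Strict Implicit. Unset Printing Implicit Defensive.
Import Order.TTheory GRing.Theory.
Local Open Scope ring_scope.

Definition is_lin (k : pzRingType) (U W : lmodType k) (h : U -> W) : Prop :=
  forall (c : k) (x y : U), h (c *: x + y) = c *: h x + h y.

Definition castT (T : nat -> Type) (m n : nat) (e : m = n) (x : T m) : T n :=
  eq_rect m T x n e.

(* Block indexing: for arities ar : 'I_m -> nat, the l-th position of the
   i-th block inside 'I_(ar 0 + ... + ar (m-1)), i.e. the position
   ar 0 + ... + ar (i-1) + l. *)
Lemma blk_subproof (m : nat) (ar : 'I_m -> nat) (i : 'I_m) (l : 'I_(ar i)) :
  (\sum_(j < m | (j < i)%N) ar j + l < \sum_(j < m) ar j)%N.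
Proof.
apply: (@leq_trans (\sum_(j < m | (j < i)%N) ar j + ar i)%N).
  by rewrite ltn_add2l.
rewrite [X in (_ <= X)%N](bigD1 i) //= [X in (_ <= X)%N]addnC leq_add2r.
apply: sub_le_big; try (move=> *; by rewrite ?leq_addr).
by move=> j ji; rewrite neq_ltn ji.
Qed.

Definition blk (m : nat) (ar : 'I_m -> nat) (i : 'I_m) (l : 'I_(ar i))
  : 'I_(\sum_(j < m) ar j) := Ordinal (blk_subproof l).

(* Operads (classical / "unfolded" form of the Loday-Vallette notion)  *)
(* Right action convention (mathcomp: (s * t) x = t (s x)):             *)
(*   f.(s*t) = (f.s).t ; on algebras (f.s)(a_1..a_n) = f(a_s1..a_sn).   *)

Record operad (k : comPzRingType) := Operad {
  op : nat -> lmodType k;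
  op_act : forall n, 'S_n -> op n -> op n;
  op_unit : op 1;
  op_gamma : forall (m : nat) (ar : 'I_m -> nat),
      op m -> (forall i : 'I_m, op (ar i)) -> op (\sum_(i < m) ar i);
  op_act_lin : forall n (s : 'S_n), is_lin (op_act s);
  op_act1 : forall n (f : op n), op_act 1%g f = f;
  op_actM : forall n (s t : 'S_n) (f : op n),
      op_act (s * t)%g f = op_act t (op_act s f);
  op_gamma_lin_l : forall m (ar : 'I_m -> nat) (g : forall i, op (ar i)),
      is_lin (fun f : op m => op_gamma f g);
  op_gamma_lin_r : forall m (ar : 'I_m -> nat) (f : op m)
      (g : forall i, op (ar i)) (i : 'I_m),
      is_lin (fun x : op (ar i) => op_gamma f (dfwith g x));
  op_unit_l : forall n (f : op n) (e : (\sum_(i < 1) n)%N = n),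
      @castT op _ _ e (op_gamma (ar := fun _ => n) op_unit (fun _ => f)) = f;
  op_unit_r : forall n (f : op n) (e : (\sum_(i < n) 1)%N = n),
      @castT op _ _ e (op_gamma (ar := fun _ => 1%N) f (fun _ => op_unit)) = f;
  op_assoc : forall m (ar : 'I_m -> nat) (f : op m) (g : forall i, op (ar i))
      (ar2 : 'I_(\sum_(i < m) ar i) -> nat) (h : forall j, op (ar2 j))
      (e : (\sum_(j < \sum_(i < m) ar i) ar2 j
            = \sum_(i < m) \sum_(l < ar i) ar2 (blk l))%N),
      @castT op _ _ e (op_gamma (op_gamma f g) h)
      = op_gamma (ar := fun i => (\sum_(l < ar i) ar2 (blk l))%N) f
          (fun i => op_gamma (ar := fun l => ar2 (blk l)) (g i)
                      (fun l => h (blk l)));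
  op_equiv_l : forall m (ar : 'I_m -> nat) (s : 'S_m) (f : op m)
      (g : forall i, op (ar i))
      (e : (\sum_(i < m) ar (s i) = \sum_(i < m) ar i)%N)
      (r : 'S_(\sum_(i < m) ar i)),
      (forall (i : 'I_m) (l : 'I_(ar (s i))),
          r (cast_ord e (blk (ar := fun j => ar (s j)) l)) = blk l) ->
      op_gamma (op_act s f) g
      = op_act r (@castT op _ _ e (op_gamma (ar := fun j => ar (s j)) f
                                 (fun i => g (s i))));
  op_equiv_r : forall m (ar : 'I_m -> nat) (f : op m) (g : forall i, op (ar i))
      (t : forall i, 'S_(ar i)) (r : 'S_(\sum_(i < m) ar i)),
      (forall (i : 'I_m) (l : 'I_(ar i)), r (blk l) = blk (t i l)) ->
      op_gamma f (fun i => op_act (t i) (g i)) = op_act r (op_gamma f g)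
}.

Arguments op {k} P _ : rename.
Arguments op_act {k P n} : rename.
Arguments op_unit {k P} : rename.
Arguments op_gamma {k P m ar} : rename.

Definition reduced (k : comPzRingType) (P : operad k) : Prop :=
  forall x : op P 0, x = 0.

(* P-algebras: gamma_A : P(A) = (+)_n P(n) (x)_{S_n} A^{(x)n} -> A,     *)
(* written out as a family of multilinear, S_n-invariant maps           *)

Record algebra (k : comPzRingType) (P : operad k) := Algebra {
  carrier : lmodType k;
  alg_act : forall n, op P n -> ('I_n -> carrier) -> carrier;
  alg_lin_l : forall n (a : 'I_n -> carrier),
      is_lin (fun f : op P n => alg_act f a);
  alg_lin_r : forall n (f : op P n) (a : 'I_n -> carrier) (i : 'I_n),
      is_lin (fun x : carrier => alg_act f (fun j => if j == i then x else a j));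
  alg_equiv : forall n (s : 'S_n) (f : op P n) (a : 'I_n -> carrier),
      alg_act (op_act s f) a = alg_act f (fun i => a (s i));
  alg_unit : forall a : 'I_1 -> carrier, alg_act op_unit a = a ord0;
  alg_gamma : forall m (ar : 'I_m -> nat) (f : op P m)
      (g : forall i, op P (ar i)) (a : 'I_(\sum_(i < m) ar i) -> carrier),
      alg_act (op_gamma f g) a
      = alg_act f (fun i => alg_act (g i) (fun l => a (blk l)))
}.

Arguments carrier {k P} A : rename.
Arguments alg_act {k P} A {n} : rename.

Definition alg_morph (k : comPzRingType) (P : operad k) (A B : algebra P)
  (h : carrier A -> carrier B) : Prop :=
  is_lin h /\
  forall n (f : op P n) (a : 'I_n -> carrier A),
    h (alg_act A f a) = alg_act B f (fun i => h (a i)).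

Definition is_free_alg (k : comPzRingType) (P : operad k) (V : lmodType k)
  (F : algebra P) (iota : V -> carrier F) : Prop :=
  is_lin iota /\
  forall (B : algebra P) (phi : V -> carrier B), is_lin phi ->
    exists h : carrier F -> carrier B,
      [/\ alg_morph h, (forall v, h (iota v) = phi v) &
          forall h', alg_morph h' -> (forall v, h' (iota v) = phi v) ->
                     forall x, h' x = h x].

(* sum_{k=1}^n lam^(k-1) sum_{i_1<...<i_k} f(a_1,..,d a_{i_1},..,d a_{i_k},..,a_n),
   the inner sum over k-subsets {i_1<...<i_k} of positions *)
Definition weighted_leibniz (k : comPzRingType) (P : operad k) (A : algebra P)
  (lam : k) (n : nat) (f : op P n) (a : 'I_n -> carrier A)
  (da : 'I_n -> carrier A) : carrier A :=
  \sum_(S : {set 'I_n} | S != set0)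
     lam ^+ (#|S|.-1) *: alg_act A f (fun i => if i \in S then da i else a i).

Definition is_derivation (k : comPzRingType) (P : operad k) (A : algebra P)
  (lam : k) (d : carrier A -> carrier A) : Prop :=
  is_lin d /\
  forall n, (0 < n)%N -> forall (f : op P n) (a : 'I_n -> carrier A),
    d (alg_act A f a) = weighted_leibniz lam f a (fun i => d (a i)).

From HB Require Import structures.
From mathcomp Require Import all_boot all_order all_fingroup all_algebra.
From Stdlib Require Import FunctionalExtensionality.
Import GRing.Theory.
Local Open Scope ring_scope.
Set Implicit Arguments. Unset Strict Implicit.

(* Write A[e] for A (+) A e with e^2 = lam e, i.e. A tensored with the weighted
   dual numbers k[e]/(e^2 - lam e).  Every P-algebra structure on A extends
   k[e]-multilinearly to A[e]; expanding f(a_1 + b_1 e, ..., a_n + b_n e) gives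
   exactly f(a) + (weighted Leibniz sum) e.  Hence a linear d is a derivation of
   weight lam iff x |-> x + d(x) e is a P-algebra morphism A -> A[e], and the
   universal property of the free algebra P(V) turns each phi : V -> P(V) into
   a unique such morphism extending v |-> v + phi(v) e. *)

Lemma is_lin0 (k : pzRingType) (U W : lmodType k) (h : U -> W) :
  is_lin h -> h 0 = 0.
Proof.
move=> h_lin; have := h_lin (-1) 0 0.
by rewrite scaler0 addr0 scaleN1r => E; rewrite {1}E addNr.
Qed.

Section BlockIndexing.
Variables (m : nat) (ar : 'I_m -> nat).

Lemma sum_before_mono (i i' : 'I_m) : (i < i')%N ->
  (\sum_(j < m | (j < i)%N) ar j + ar i <= \sum_(j < m | (j < i')%N) ar j)%N.
Proof.
move=> lt_ii'; rewrite [X in (_ <= X)%N](bigD1 i) //= addnC leq_add2l.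
rewrite [X in (X <= _)%N]big_mkcond [X in (_ <= X)%N]big_mkcond /=.
apply: leq_sum => j _; case: ifP => // lt_ji.
by rewrite (ltn_trans lt_ji lt_ii') neq_ltn lt_ji.
Qed.

Lemma blk_lt (i i' : 'I_m) (l : 'I_(ar i)) (l' : 'I_(ar i')) :
  (i < i')%N -> (blk l < blk l')%N.
Proof.
move=> lt_ii' /=.
apply: leq_trans (leq_trans (sum_before_mono lt_ii') (leq_addr _ _)).
by rewrite ltn_add2l.
Qed.

Lemma blk_eqE (i i' : 'I_m) (l : 'I_(ar i)) (l' : 'I_(ar i')) :
  (blk l == blk l') = (i == i') && (val l == val l').
Proof.
case: (ltngtP i i') => [lt_ii'|lt_i'i|eq_ii'].
- by rewrite -!val_eqE /= (ltn_eqF lt_ii') (ltn_eqF (blk_lt l l' lt_ii')).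
- by rewrite -!val_eqE /= (gtn_eqF lt_i'i) (gtn_eqF (blk_lt l' l lt_i'i)).
- have E : i = i' by apply: val_inj.
  by subst i'; rewrite eqxx -val_eqE /= eqn_add2l.
Qed.

Lemma blk_surj (j : 'I_(\sum_(i < m) ar i)) :
  exists i (l : 'I_(ar i)), blk l = j.
Proof.
pose blk_tagged (t : {i : 'I_m & 'I_(ar i)}) := blk (tagged t).
have blk_inj : injective blk_tagged.
  move=> [i l] [i' l'] /eqP; rewrite /blk_tagged /= blk_eqE.
  by case/andP=> /eqP E ll'; subst i'; congr Tagged; apply/val_inj/eqP.
have card_le : (#|'I_(\sum_(i < m) ar i)| <= #|{: {i : 'I_m & 'I_(ar i)}}|)%N.
  rewrite card_tagged card_ord sumnE big_map big_enum /=.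
  by under [X in (_ <= X)%N]eq_bigr do rewrite card_ord.
have /codomP [[i l] ->] := inj_card_onto blk_inj card_le j.
by exists i, l.
Qed.

End BlockIndexing.

Section WeightedDualNumbers.
Variables (k : comPzRingType) (P : operad k) (A : algebra P) (lam : k).

Definition dual : lmodType k := (carrier A * carrier A)%type.

Definition dual_eps (x : dual) : dual := (0, x.1 + lam *: x.2).

Definition dual_act n (f : op P n) (x : 'I_n -> dual) : dual :=
  (alg_act A f (fun i => (x i).1),
   weighted_leibniz lam f (fun i => (x i).1) (fun i => (x i).2)).

Definition setslot n (x : 'I_n -> dual) (i : 'I_n) (y : dual) : 'I_n -> dual :=
  fun j => if j == i then y else x j.

Definition dual_multilinear n (M : ('I_n -> dual) -> dual) : Prop :=
  forall (x : 'I_n -> dual) (i : 'I_n),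
    (forall (c : k) (p q : dual),
       M (setslot x i (c *: p + q)) = c *: M (setslot x i p) + M (setslot x i q))
    /\ (forall p, M (setslot x i (dual_eps p)) = dual_eps (M (setslot x i p))).

(* Induction on the number of slots carrying a nonzero e-part, using
   (a, b) = 1 *: (a, 0) + dual_eps (b, 0). *)
Lemma dual_multilinear_eq n (M1 M2 : ('I_n -> dual) -> dual) :
  dual_multilinear M1 -> dual_multilinear M2 ->
  (forall a, M1 (fun j => (a j, 0)) = M2 (fun j => (a j, 0))) ->
  forall x, M1 x = M2 x.
Proof.
move=> M1_lin M2_lin eq_pure.
suff eq_low m x : (forall j : 'I_n, (m <= j)%N -> (x j).2 = 0) -> M1 x = M2 x.
  by move=> x; apply: (eq_low n) => j; rewrite leqNgt ltn_ord.
elim: m x => [|m IHm] x x_low.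
  have -> : x = (fun j => ((x j).1, 0)).
    by apply: functional_extensionality => j; rewrite -(x_low j) //; case: (x j).
  exact: eq_pure.
have [lt_mn|le_nm] := ltnP m n; last first.
  by apply: IHm => j le_mj; move: (ltn_ord j); rewrite ltnNge (leq_trans le_nm le_mj).
pose i := Ordinal lt_mn.
have x_split : x = setslot x i (1 *: ((x i).1, 0) + dual_eps ((x i).2, 0)).
  apply: functional_extensionality => j; rewrite /setslot.
  case: eqP => [->|//]; rewrite scale1r /dual_eps /=; case: (x i) => a b /=.
  by rewrite scaler0 !addr0; apply: injective_projections; rewrite /= ?addr0 ?add0r.
have setslot_low y : y.2 = 0 ->
    forall j : 'I_n, (m <= j)%N -> (setslot x i y j).2 = 0.
  move=> y2 j le_mj; rewrite /setslot; case: eqP => // /eqP ne_ji.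
  apply: x_low; rewrite ltn_neqAle le_mj andbT; apply: contra ne_ji => /eqP E.
  by apply/eqP/val_inj; rewrite /= E.
rewrite x_split (proj1 (M1_lin x i)) (proj1 (M2_lin x i)).
rewrite (proj2 (M1_lin x i)) (proj2 (M2_lin x i)).
by rewrite !IHm //; apply: setslot_low.
Qed.

Lemma alg_act_slot0 n (f : op P n) (a : 'I_n -> carrier A) i :
  alg_act A f (fun j => if j == i then 0 else a j) = 0.
Proof. exact: (is_lin0 (alg_lin_r f a i)). Qed.

Lemma setslot_fst n (x : 'I_n -> dual) i y :
  (fun j => (setslot x i y j).1) = fun j => if j == i then y.1 else (x j).1.
Proof. by apply: functional_extensionality => j; rewrite /setslot; case: (j == i). Qed.

Lemma setslot_mix n (x : 'I_n -> dual) i y (S : {set 'I_n}) :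
  (fun j => if j \in S then (setslot x i y j).2 else (setslot x i y j).1) =
  fun j => if j == i then (if i \in S then y.2 else y.1)
           else (if j \in S then (x j).2 else (x j).1).
Proof. by apply: functional_extensionality => j; rewrite /setslot; case: eqP => [->|]. Qed.

Lemma dual_act_pure n (f : op P n) (a : 'I_n -> carrier A) :
  dual_act f (fun j => (a j, 0)) = (alg_act A f a, 0).
Proof.
rewrite /dual_act /=; congr pair; rewrite /weighted_leibniz big1 // => S.
case/set0Pn=> i iS.
have -> : (fun j => if j \in S then 0 else a j)
        = fun j => if j == i then 0 else (if j \in S then 0 else a j).
  by apply: functional_extensionality => j; case: eqP => [->|]; rewrite ?iS.
by rewrite alg_act_slot0 scaler0.
Qed.

Lemma dual_act_lin_l n (x : 'I_n -> dual) : is_lin (fun f : op P n => dual_act f x).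
Proof.
move=> c f g; rewrite /dual_act; congr pair => /=; first by rewrite alg_lin_l.
rewrite /weighted_leibniz scaler_sumr -big_split; apply: eq_bigr => S _ /=.
by rewrite alg_lin_l scalerDr !scalerA mulrC.
Qed.

(* The subsets containing i split as i |: T with i \notin T; the factor lam of
   e^2 = lam e is absorbed by |i |: T| = |T| + 1. *)
Lemma leibniz_sum_eps n (H : {set 'I_n} -> carrier A -> carrier A) (i : 'I_n)
    (u v : carrier A) :
  (forall S (c : k) a b, H S (c *: a + b) = c *: H S a + H S b) ->
  (forall S, H S 0 = 0) -> (forall T, H (i |: T) = H T) ->
  \sum_(S : {set 'I_n} | S != set0)
     lam ^+ (#|S|.-1) *: H S (if i \in S then u + lam *: v else 0)
  = H set0 u + lam *: \sum_(S : {set 'I_n} | S != set0)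
                        lam ^+ (#|S|.-1) *: H S (if i \in S then v else u).
Proof.
move=> H_lin H0 H_indep.
pose T (S : {set 'I_n}) := lam ^+ #|S| *: H S (if i \in S then v else u).
have -> : H set0 u + lam *: \sum_(S : {set 'I_n} | S != set0)
            lam ^+ (#|S|.-1) *: H S (if i \in S then v else u)
          = \sum_(S : {set 'I_n}) T S.
  rewrite [RHS](bigD1 set0) //= /T cards0 expr0 scale1r in_set0 scaler_sumr.
  congr (_ + _); apply: eq_bigr => S S_neq0.
  by rewrite scalerA -exprS prednK ?card_gt0.
rewrite (bigID (fun S : {set 'I_n} => i \in S)) /= [X in _ + X]big1 ?addr0;
  last by move=> S /andP [_ /negbTE ->]; rewrite H0 scaler0.
have -> : \sum_(S : {set 'I_n} | (S != set0) && (i \in S))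
    lam ^+ (#|S|.-1) *: H S (if i \in S then u + lam *: v else 0)
  = \sum_(S : {set 'I_n} | i \in S) (T S + lam ^+ (#|S|.-1) *: H S u).
  apply: eq_big => S.
    by case: (boolP (i \in S)) => iS; rewrite ?andbF ?andbT //; apply/set0Pn; exists i.
  case/andP=> S_neq0 iS; rewrite iS addrC H_lin scalerDr scalerA /T iS.
  by rewrite -exprSr prednK ?card_gt0.
rewrite big_split /= [RHS](bigID (fun S : {set 'I_n} => i \in S)) /=; congr (_ + _).
rewrite (reindex_onto (fun T => i |: T) (fun S => S :\ i)) /=;
  last by move=> S iS; rewrite setD1K.
apply: eq_big => X.
  rewrite setU11 /=; case: (boolP (i \in X)) => iX /=; last by rewrite setU1K ?eqxx.
  by apply/eqP => E; have := setD11 i (i |: X); rewrite E iX.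
case/andP=> _ /eqP E; have iX : i \notin X by rewrite -E setD11.
by rewrite /T (negbTE iX) cardsU1 iX add1n /= H_indep.
Qed.

Lemma dual_act_multilinear n (f : op P n) : dual_multilinear (dual_act f).
Proof.
move=> x i; split.
  move=> c p q; rewrite /dual_act; congr pair => /=; first by rewrite !setslot_fst alg_lin_r.
  rewrite /weighted_leibniz scaler_sumr -big_split; apply: eq_bigr => S _ /=.
  by rewrite !setslot_mix; case: (i \in S); rewrite alg_lin_r scalerDr !scalerA mulrC.
move=> p; rewrite /dual_act; congr pair => /=; first by rewrite setslot_fst alg_act_slot0.
pose H (S : {set 'I_n}) y := alg_act A f (fun j => if j == i then y
                               else (if j \in S then (x j).2 else (x j).1)).
have -> : alg_act A f (fun j => (setslot x i p j).1) = H set0 p.1.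
  rewrite setslot_fst /H; congr (alg_act A f); apply: functional_extensionality => j.
  by rewrite in_set0.
rewrite /weighted_leibniz.
under eq_bigr => S _ do rewrite setslot_mix.
under [in RHS]eq_bigr => S _ do rewrite setslot_mix.
apply: (@leibniz_sum_eps n H i).
- by move=> S c a b; apply: alg_lin_r.
- by move=> S; rewrite /H alg_act_slot0.
- move=> T; apply: functional_extensionality => y; rewrite /H.
  congr (alg_act A f); apply: functional_extensionality => j.
  by case: eqP => // /eqP ne_ji; rewrite !inE (negbTE ne_ji).
Qed.

Lemma dual_multilinear_perm n (s : 'S_n) (f : op P n) :
  dual_multilinear (fun x => dual_act f (fun i => x (s i))).
Proof.
move=> x j.
have setslot_perm y :
    (fun i => setslot x j y (s i)) = setslot (fun i => x (s i)) ((s^-1)%g j) y.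
  apply: functional_extensionality => i; rewrite /setslot.
  by rewrite -[i == _](inj_eq (@perm_inj _ s)) permKV.
have [lin eps] := dual_act_multilinear f (fun i => x (s i)) ((s^-1)%g j).
by split=> [c p q|p]; rewrite !setslot_perm ?lin ?eps.
Qed.

Lemma dual_multilinear_gamma m (ar : 'I_m -> nat) (f : op P m)
    (g : forall i, op P (ar i)) :
  dual_multilinear (fun x => dual_act f (fun i => dual_act (g i) (fun l => x (blk l)))).
Proof.
move=> x j; have [i0 [l0 <-]] := blk_surj j.
have setslot_blk y :
    (fun i => dual_act (g i) (fun l => setslot x (blk l0) y (blk l)))
  = setslot (fun i => dual_act (g i) (fun l => x (blk l))) i0
            (dual_act (g i0) (setslot (fun l => x (blk l)) l0 y)).
  apply: functional_extensionality => i; rewrite /setslot.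
  have [E|ne] := eqVneq i i0.
    subst i; congr dual_act; apply: functional_extensionality => l.
    by rewrite blk_eqE eqxx /= val_eqE.
  congr dual_act; apply: functional_extensionality => l.
  by rewrite blk_eqE (negbTE ne).
have [lin_out eps_out] :=
  dual_act_multilinear f (fun i => dual_act (g i) (fun l => x (blk l))) i0.
have [lin_in eps_in] := dual_act_multilinear (g i0) (fun l => x (blk l)) l0.
by split=> [c p q|p]; rewrite !setslot_blk ?lin_in ?lin_out ?eps_in ?eps_out.
Qed.

Lemma dual_act_equiv n (s : 'S_n) (f : op P n) (x : 'I_n -> dual) :
  dual_act (op_act s f) x = dual_act f (fun i => x (s i)).
Proof.
apply: (dual_multilinear_eq (dual_act_multilinear _) (dual_multilinear_perm s f)).
by move=> a; rewrite !dual_act_pure alg_equiv.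
Qed.

Lemma dual_act_unit (x : 'I_1 -> dual) : dual_act op_unit x = x ord0.
Proof.
apply: (@dual_multilinear_eq 1 (dual_act op_unit) (fun x => x ord0)).
- exact: dual_act_multilinear.
- by move=> y i; rewrite (ord1 i) /setslot eqxx.
- by move=> a; rewrite dual_act_pure alg_unit.
Qed.

Lemma dual_act_gamma m (ar : 'I_m -> nat) (f : op P m) (g : forall i, op P (ar i))
    (x : 'I_(\sum_(i < m) ar i) -> dual) :
  dual_act (op_gamma f g) x
  = dual_act f (fun i => dual_act (g i) (fun l => x (blk l))).
Proof.
apply: (dual_multilinear_eq (dual_act_multilinear _) (dual_multilinear_gamma f g)).
move=> a; rewrite dual_act_pure alg_gamma.
have -> : (fun i => dual_act (g i) (fun l => (a (blk l), 0)))
        = fun i => (alg_act A (g i) (fun l => a (blk l)), 0).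
  by apply: functional_extensionality => i; rewrite dual_act_pure.
by rewrite dual_act_pure.
Qed.

Definition dual_algebra : algebra P :=
  @Algebra k P dual (fun n f x => dual_act f x)
    (fun n x => dual_act_lin_l x)
    (fun n f x i => proj1 (dual_act_multilinear f x i))
    dual_act_equiv dual_act_unit dual_act_gamma.

Lemma graph_morph_of_derivation (d : carrier A -> carrier A) :
  reduced P -> is_derivation lam d ->
  alg_morph (A := A) (B := dual_algebra) (fun x => (x, d x)).
Proof.
move=> P_reduced [d_lin d_leibniz]; split.
  by move=> c x y; rewrite d_lin.
case=> [|n] f a; last by rewrite /= /dual_act /= -d_leibniz.
rewrite (P_reduced f) (is_lin0 (alg_lin_l a)) (is_lin0 d_lin).
by rewrite /= (is_lin0 (dual_act_lin_l (fun i : 'I_0 => (a i, d (a i))))).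
Qed.

Lemma derivation_of_morph (h : carrier A -> dual) :
  alg_morph (A := A) (B := dual_algebra) h -> (forall x, (h x).1 = x) ->
  is_derivation lam (fun x => (h x).2).
Proof.
move=> [h_lin h_act] h_fst; split.
  by move=> c x y; rewrite h_lin.
move=> n _ f a; rewrite h_act /= /dual_act /=; congr weighted_leibniz.
by apply: functional_extensionality => i; rewrite h_fst.
Qed.

Lemma fst_morph : alg_morph (A := dual_algebra) (B := A) fst.
Proof. by split. Qed.

End WeightedDualNumbers.

Lemma alg_morph_comp (k : comPzRingType) (P : operad k) (A B C : algebra P)
    (g : carrier B -> carrier C) (h : carrier A -> carrier B) :
  alg_morph g -> alg_morph h -> alg_morph (g \o h).
Proof.
move=> [g_lin g_act] [h_lin h_act]; split.
  by move=> c x y /=; rewrite h_lin g_lin.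
by move=> n f a /=; rewrite h_act g_act.
Qed.

Lemma free_alg_morph_eq (k : comPzRingType) (P : operad k) (V : lmodType k)
    (F B : algebra P) (iota : V -> carrier F) (h1 h2 : carrier F -> carrier B) :
  is_free_alg iota -> alg_morph h1 -> alg_morph h2 ->
  (forall v, h1 (iota v) = h2 (iota v)) -> forall x, h1 x = h2 x.
Proof.
move=> [iota_lin univ] h1_morph h2_morph h12_iota x.
have h1_iota_lin : is_lin (h1 \o iota).
  by move=> c u v /=; rewrite iota_lin (proj1 h1_morph).
have [h [_ _ h_uniq]] := univ B (h1 \o iota) h1_iota_lin.
by rewrite (h_uniq h1) // (h_uniq h2) // => v; rewrite -h12_iota.
Qed.

Theorem proposition2p5 (k : comPzRingType) (P : operad k) (HP : reduced P)
  (V : lmodType k) (F : algebra P) (iota : V -> carrier F)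
  (Hfree : is_free_alg iota) (lam : k)
  (phi : V -> carrier F) (Hphi : is_lin phi) :
  (exists d : carrier F -> carrier F,
     [/\ is_derivation lam d,
         (forall v, d (iota v) = phi v) &
         forall n, (0 < n)%N -> forall (f : op P n) (v : 'I_n -> V),
           d (alg_act F f (fun i => iota (v i)))
           = weighted_leibniz lam f (fun i => iota (v i)) (fun i => phi (v i))])
  /\
  (forall d1 d2 : carrier F -> carrier F,
     is_derivation lam d1 -> is_derivation lam d2 ->
     (forall v, d1 (iota v) = phi v) -> (forall v, d2 (iota v) = phi v) ->
     forall x, d1 x = d2 x).
Proof.
have [iota_lin univ] := Hfree.
pose phi_e (v : V) : carrier (dual_algebra F lam) := (iota v, phi v).
have phi_e_lin : is_lin phi_e by move=> c u v; rewrite /phi_e iota_lin Hphi.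
have [h [h_morph h_iota _]] := univ _ phi_e phi_e_lin.
have h_fst x : (h x).1 = x.
  apply: (free_alg_morph_eq (h2 := id) Hfree
            (alg_morph_comp (fst_morph F lam) h_morph)) => [|v]; first by split.
  by rewrite /= h_iota.
have d_der := derivation_of_morph h_morph h_fst.
split.
  exists (fun x => (h x).2); split=> // [v|n n_gt0 f v]; first by rewrite h_iota.
  rewrite (proj2 d_der n n_gt0); congr weighted_leibniz.
  by apply: functional_extensionality => i; rewrite h_iota.
move=> d1 d2 d1_der d2_der d1_iota d2_iota x.
have graphs_iota v : (iota v, d1 (iota v)) = (iota v, d2 (iota v)).
  by rewrite d1_iota d2_iota.
by have [] := free_alg_morph_eq Hfree (graph_morph_of_derivation HP d1_der)
  (graph_morph_of_derivation HP d2_der) graphs_iota x.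
Qed.
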